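(* Let $X$ and $Y$ be finite sets with $|Y| = n$, let $I = X \cap Y$, and let $p \in [1/2, 1]$. Define two random variables as follows. (1) (Mechanism $\mathcal M_Y$.) Include each element $y \in Y$ in a random subset $Y_{\mathrm{sub}} \subseteq Y$ independently with probability $p$, and set $Z = |X \cap Y_{\mathrm{sub}}|$. (2) (Mechanism $\mathcal M'_Y$.) Sample $s \sim \mathrm{Bin}(n, 2(1-p))$; then choose $T$ uniformly at random among all subsets of $Y$ of cardinality $s$; then, independently for each $y \in I \cap T$, flip a fair coin $c_y \sim \mathrm{Ber}(1/2)$; set $Z' = |I \setminus T| + \sum_{y \in I \cap T} c_y$. Then $Z$ and $Z'$ have the same probability mass function: $\Pr[Z = z] = \Pr[Z' = z]$ for all integers $z \ge 0$.
   Context: $\mathrm{Ber}(r)$ denotes a Bernoulli random variable with success probability $r$, and $\mathrm{Bin}(m, r)$ a binomial random variable with $m$ trials and success probability $r$. All random choices are independent unless stated otherwise. *)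

From mathcomp Require Import all_boot all_order all_algebra.
Set Implicit Arguments. Unset Strict Implicit. Unset Printing Implicit Defensive.
Import Order.TTheory GRing.Theory Num.Theory.
Local Open Scope ring_scope.

Section Mech.
Variables (R : realFieldType) (T : finType).

Definition bin_pmf (m : nat) (r : R) (k : nat) : R :=
  ('C(m, k))%:R * r ^+ k * (1 - r) ^+ (m - k).

Definition indep_subset_pmf (A : {set T}) (r : R) (S : {set T}) : R :=
  if S \subset A then r ^+ #|S| * (1 - r) ^+ (#|A| - #|S|) else 0.

Definition unif_ksubset_pmf (A : {set T}) (s : nat) (S : {set T}) : R :=
  if (S \subset A) && (#|S| == s) then ('C(#|A|, s))%:R^-1 else 0.

Definition PrZ (X Y : {set T}) (p : R) (z : nat) : R :=
  \sum_(S : {set T}) indep_subset_pmf Y p S * (#|X :&: S| == z)%:R.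

(* Pr[Z' = z] for mechanism M'_Y: s ~ Bin(n, 2(1-p)), T uniform s-subset of Y,
   fair coins on I :&: T (the set C of coins showing 1 is a subset of I :&: T
   including each element independently w.p. 1/2), Z' = |I \ T| + |C|. *)
Definition PrZ' (X Y : {set T}) (p : R) (z : nat) : R :=
  let I := X :&: Y in
  \sum_(s < #|Y|.+1) bin_pmf #|Y| (2 * (1 - p)) s *
    \sum_(Ts : {set T}) unif_ksubset_pmf Y s Ts *
      \sum_(C : {set T}) indep_subset_pmf (I :&: Ts) (2%:R^-1) C *
        ((#|I :\: Ts| + #|C|)%N == z)%:R.

End Mech.

(* Both pmfs are coefficients of products, over the elements of Y, of
   per-element generating polynomials.  In M_Y an element of X :&: Y
   contributes p 'X + (1 - p).  A uniform subset of Y with Bin(|Y|, q) size is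
   an independent q-subset of Y, so in M'_Y, with q = 2(1 - p), such an element
   contributes q ('X / 2 + 1 / 2) + (1 - q) 'X, which is the same polynomial;
   elements of Y outside X contribute 1 in both mechanisms. *)

From mathcomp Require Import all_boot all_order all_algebra.
From mathcomp Require Import ring.
Import Order.TTheory GRing.Theory Num.Theory.
Local Open Scope ring_scope.

Section IndependentSubsets.
Variables (R : realFieldType) (T : finType).
Implicit Types (A B S : {set T}) (r : R).

Lemma indep_subset_pmfE A r S :
  indep_subset_pmf A r S =
  \prod_(i : T) (if i \in S then (if i \in A then r else 0)
                 else (if i \in A then 1 - r else 1)).
Proof.
rewrite /indep_subset_pmf; case: ifPn => [sSA|/subsetPn[i iS niA]]; last first.
  by rewrite (bigD1 i) //= iS (negbTE niA) mul0r.
rewrite (bigID (mem S)) /= (eq_bigr (fun=> r)) => [|i iS]; last first.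
  by rewrite iS (subsetP sSA).
rewrite [X in _ = _ * X](eq_bigr (fun i => if i \in A then 1 - r else 1)); last first.
  by move=> i /negbTE ->.
rewrite -big_mkcondr [X in _ = _ * X](eq_bigl (mem (A :\: S))) => [|i]; last first.
  by rewrite !inE.
by rewrite !prodr_const cardsD (setIidPr sSA).
Qed.

Lemma sum_indep_subset_prod (U : comAlgType R) A r (F G : T -> U) :
  \sum_(S : {set T}) indep_subset_pmf A r S *:
     \prod_(i : T) (if i \in S then F i else G i) =
  \prod_(i : T) (if i \in A then r *: F i + (1 - r) *: G i else G i).
Proof.
transitivity (\sum_(S : {set T}) \prod_(i : T)
   (if i \in S then (if i \in A then r else 0) *: F i
    else (if i \in A then 1 - r else 1) *: G i)).
  apply: eq_bigr => S _; rewrite indep_subset_pmfE -scaler_prod.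
  by apply: eq_bigr => i _; case: ifP.
rewrite -bigA_distr; apply: eq_bigr => i _.
by case: (i \in A); rewrite /= ?scale0r ?add0r ?scale1r.
Qed.

Lemma exprn_card (U : pzSemiRingType) (x : U) S :
  x ^+ #|S| = \prod_(i : T) (if i \in S then x else 1).
Proof. by rewrite -big_mkcond prodr_const. Qed.

Lemma exprn_cardI (U : pzSemiRingType) (x : U) B S :
  x ^+ #|B :&: S| = \prod_(i : T) (if i \in S then (if i \in B then x else 1) else 1).
Proof.
rewrite exprn_card; apply: eq_bigr => i _.
by rewrite inE; case: (i \in S); case: (i \in B).
Qed.

Lemma coef_sum_scaleXn (w : {set T} -> R) (k : {set T} -> nat) z :
  (\sum_(S : {set T}) w S *: 'X^(k S))`_z = \sum_(S : {set T}) w S * (k S == z)%:R.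
Proof. by rewrite coef_sum; apply: eq_bigr => S _; rewrite coefZ coefXn eq_sym. Qed.

(* Both sides give each s-subset of Y the weight q^s (1-q)^(|Y|-s). *)
Lemma binomial_mixture_unif_ksubset (Y S : {set T}) (q : R) :
  \sum_(s < #|Y|.+1) bin_pmf #|Y| q s * unif_ksubset_pmf R Y s S =
  indep_subset_pmf Y q S.
Proof.
rewrite /unif_ksubset_pmf /indep_subset_pmf; case: ifPn => [sSY|_]; last first.
  by apply: big1 => s _; rewrite mulr0.
have ltSY : (#|S| < #|Y|.+1)%N by rewrite ltnS subset_leq_card.
rewrite (bigD1 (Ordinal ltSY)) //= big1 ?addr0 => [|s /eqP neS]; last first.
  by case: eqP => [eSs|]; rewrite ?mulr0 //; case: neS; apply: val_inj.
have binS_neq0 : ('C(#|Y|, #|S|))%:R != 0 :> R.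
  by rewrite pnatr_eq0 -lt0n bin_gt0 -ltnS.
by rewrite eqxx /bin_pmf mulrC !mulrA mulVf // mul1r.
Qed.

End IndependentSubsets.

Section Mechanisms.
Variables (R : realFieldType) (T : finType) (X Y : {set T}) (p : R).
Let q : R := 2 * (1 - p).
Let h : R := 2%:R^-1.

Lemma PrZ'E z :
  PrZ' X Y p z = \sum_(S : {set T}) indep_subset_pmf Y q S *
    \sum_(C : {set T}) indep_subset_pmf (X :&: Y :&: S) h C *
      ((#|X :&: Y :\: S| + #|C|)%N == z)%:R.
Proof.
rewrite /PrZ' /=; under eq_bigr do rewrite big_distrr.
rewrite exchange_big; apply: eq_bigr => S _ /=.
by under eq_bigr do rewrite mulrA; rewrite -big_distrl binomial_mixture_unif_ksubset.
Qed.

Lemma PrZ_coef z :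
  PrZ X Y p z =
  (\prod_(i : T) (if i \in Y then p *: (if i \in X then 'X else 1) + (1 - p) *: 1
                  else 1))`_z.
Proof.
rewrite /PrZ -coef_sum_scaleXn /=.
by under eq_bigr do rewrite exprn_cardI; rewrite sum_indep_subset_prod.
Qed.

Lemma PrZ'_coef z :
  PrZ' X Y p z =
  (\prod_(i : T) (if i \in Y then
       q *: (if i \in X then h *: 'X + (1 - h) *: 1 else 1) +
       (1 - q) *: (if i \in X then 'X else 1)
     else 1))`_z.
Proof.
pose I := X :&: Y; pose G (S : {set T}) := \prod_(i : T)
  (if i \in S then (if i \in I then h *: 'X + (1 - h) *: 1 else 1)
   else (if i \in I then 'X else 1)) : {poly R}.
have G_split S : G S =
    'X^#|I :\: S| * \sum_(C : {set T}) indep_subset_pmf (I :&: S) h C *: 'X^#|C|.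
  under [X in _ * X]eq_bigr do rewrite exprn_card.
  rewrite sum_indep_subset_prod exprn_card -big_split /=; apply: eq_bigr => i _.
  by rewrite in_setD in_setI; case: (i \in S); case: (i \in I); rewrite ?mulr1 ?mul1r.
have -> : \prod_(i : T) (if i \in Y then
       q *: (if i \in X then h *: 'X + (1 - h) *: 1 else 1) +
       (1 - q) *: (if i \in X then 'X else 1) else 1) =
    \sum_(S : {set T}) indep_subset_pmf Y q S *: G S.
  rewrite sum_indep_subset_prod; apply: eq_bigr => i _.
  by rewrite in_setI; case: (i \in Y); rewrite ?andbF ?andbT.
rewrite PrZ'E coef_sum; apply: eq_bigr => S _.
rewrite coefZ G_split; congr (_ * _).
rewrite big_distrr coef_sum; apply: eq_bigr => C _.
by rewrite /= -scalerAr -exprD coefZ coefXn eq_sym.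
Qed.

End Mechanisms.

Theorem lemma2 (R : realFieldType) (T : finType) (X Y : {set T}) (p : R) :
  2%:R^-1 <= p -> p <= 1 ->
  forall z : nat, PrZ X Y p z = PrZ' X Y p z.
Proof.
(* The identity is polynomial in p; p >= 1/2 only makes 2(1 - p) a probability. *)
move=> _ _ z; rewrite PrZ_coef PrZ'_coef; congr (_ : {poly R})`_z.
apply: eq_bigr => i _.
case: (i \in Y) => //; case: (i \in X); last first.
  by rewrite -!scalerDl !subrKC.
rewrite scalerDr !scalerA addrAC -scalerDl.
by congr (_ *: _ + _ *: _); field.
Qed.
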